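(* Let $\mathcal{X}=({\bm X},m^{\bm X}_\bullet,\nu^{\bm X})$, $\mathcal{Y}=({\bm Y},m^{\bm Y}_\bullet,\nu^{\bm Y})$ be finite Markov chains, $C:{\bm X}\times{\bm Y}\to\mathbb{R}_+$ a cost matrix, $\delta\in[0,1]$ and $k\in\mathbb{N}$. Define matrices $C^{\delta,(l)}$, $l=0,\dots,k$, by $C^{\delta,(0)}_{ij}=C_{ij}$ and $C^{\delta,(l+1)}_{ij}=\delta C_{ij}+(1-\delta)\,d_{\mathrm W}(m^{\bm X}_i,m^{\bm Y}_j;C^{\delta,(l)})$ for $i\in{\bm X},j\in{\bm Y}$. Then $d^{\delta,(k)}_{\mathrm{WL}}(\mathcal{X},\mathcal{Y};C)=d_{\mathrm W}(\nu^{\bm X},\nu^{\bm Y};C^{\delta,(k)})$.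
   Context: A finite Markov chain consists of a finite set, a transition kernel $m^{\bm X}_\bullet:{\bm X}\to\mathcal{P}({\bm X})$ and an initial distribution. For $\alpha\in\mathcal{P}({\bm X}),\beta\in\mathcal{P}({\bm Y})$ and $D:{\bm X}\times{\bm Y}\to\mathbb{R}_+$, $d_{\mathrm W}(\alpha,\beta;D)=\inf_{(X,Y)\in\mathcal{C}(\alpha,\beta)}\mathbb{E}\,D(X,Y)$, where $\mathcal{C}(\alpha,\beta)$ is the set of couplings. A Markovian coupling between $\mathcal{X}$ and $\mathcal{Y}$ is a (possibly time-inhomogeneous) Markov chain $(X_t,Y_t)_{t\in\mathbb{N}}$ on ${\bm X}\times{\bm Y}$ with $\mathrm{law}(X_0,Y_0)\in\mathcal{C}(\nu^{\bm X},\nu^{\bm Y})$ and, for all $t,x,y$, the conditional law of $(X_{t+1},Y_{t+1})$ given $(X_t,Y_t)=(x,y)$ in $\mathcal{C}(m^{\bm X}_x,m^{\bm Y}_y)$; $\Pi(\mathcal{X},\mathcal{Y})$ is their set. $d^{\delta,(k)}_{\mathrm{WL}}(\mathcal{X},\mathcal{Y};C)=\inf_{\Pi(\mathcal{X},\mathcal{Y})}\mathbb{E}\big[\sum_{t=0}^{k-1}\delta(1-\delta)^tC(X_t,Y_t)+(1-\delta)^kC(X_k,Y_k)\big]$. *)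

From HB Require Import structures.
From mathcomp Require Import all_boot all_order all_algebra.
From mathcomp Require Import boolp classical_sets reals.
Set Implicit Arguments. Unset Strict Implicit. Unset Printing Implicit Defensive.
Import Order.TTheory GRing.Theory Num.Theory.
Local Open Scope ring_scope.
Local Open Scope classical_set_scope.

Section Defs.
Variable R : realType.

Definition is_pmf (T : finType) (p : T -> R) :=
  (forall t, 0 <= p t) /\ \sum_(t : T) p t = 1.

Record fmc (X : finType) := FMC {
  kern : X -> X -> R;
  init : X -> R;
  kern_pmf : forall x, is_pmf (kern x);
  init_pmf : is_pmf init }.

Definition is_coupling (X Y : finType) (a : X -> R) (b : Y -> R)
  (p : X -> Y -> R) :=
  [/\ forall x y, 0 <= p x y,
      forall x, \sum_(y : Y) p x y = a x &
      forall y, \sum_(x : X) p x y = b y].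

Definition dW (X Y : finType) (a : X -> R) (b : Y -> R) (D : X -> Y -> R) : R :=
  inf [set r | exists p, is_coupling a b p /\
                 r = \sum_(x : X) \sum_(y : Y) p x y * D x y].

(* A Markovian coupling is given by its initial joint law mu and its
   (time-inhomogeneous) transition kernels K t (x,y) on X * Y. *)
Definition is_markov_coupling (X Y : finType) (MX : fmc X) (MY : fmc Y)
  (mu : X -> Y -> R) (K : nat -> X -> Y -> X -> Y -> R) :=
  is_coupling (init MX) (init MY) mu /\
  forall t x y, is_coupling (kern MX x) (kern MY y) (K t x y).

Fixpoint law (X Y : finType) (mu : X -> Y -> R)
  (K : nat -> X -> Y -> X -> Y -> R) (t : nat) : X -> Y -> R :=
  match t with
  | 0 => mu
  | t'.+1 => fun x' y' =>
      \sum_(x : X) \sum_(y : Y) law mu K t' x y * K t' x y x' y'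
  end.

Definition expect_at (X Y : finType) (mu : X -> Y -> R)
  (K : nat -> X -> Y -> X -> Y -> R) (t : nat) (C : X -> Y -> R) : R :=
  \sum_(x : X) \sum_(y : Y) law mu K t x y * C x y.

Definition dWL (X Y : finType) (MX : fmc X) (MY : fmc Y) (delta : R) (k : nat)
  (C : X -> Y -> R) : R :=
  inf [set r | exists mu K, is_markov_coupling MX MY mu K /\
     r = \sum_(t < k) delta * (1 - delta) ^+ t * expect_at mu K t C
         + (1 - delta) ^+ k * expect_at mu K k C].

Fixpoint Cdl (X Y : finType) (MX : fmc X) (MY : fmc Y) (delta : R)
  (C : X -> Y -> R) (l : nat) : X -> Y -> R :=
  match l with
  | 0 => C
  | l'.+1 => fun i j =>
      delta * C i j + (1 - delta) * dW (kern MX i) (kern MY j) (Cdl MX MY delta C l')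
  end.

End Defs.

(* For a fixed Markovian coupling, let [F n m] be the discounted cost of its
   first [m] steps, with the terminal cost [C] replaced by [C^{delta,(n)}].
   The Bellman recursion defining [C^{delta,(n+1)}] shows that trading one
   step of the coupling for one more iterate of the cost can only lower [F]:
   [F (n+1) m <= F n (m+1)], with equality up to [eps] when the coupling
   used at time [m] is [eps]-optimal for [C^{delta,(n)}].  Chaining from
   [F 0 k] (the objective of [dWL]) down to [F k 0] (the transport cost of
   the initial coupling for [C^{delta,(k)}]) gives both inequalities. *)
From HB Require Import structures.
From mathcomp Require Import all_boot all_order all_algebra.
From mathcomp Require Import boolp classical_sets reals.
From mathcomp Require Import ring lra.
Set Implicit Arguments. Unset Strict Implicit. Unset Printing Implicit Defensive.
Import Order.TTheory GRing.Theory Num.Theory.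
Local Open Scope ring_scope.
Local Open Scope classical_set_scope.

Lemma inf_eq_approx (R : realType) (S : set R) (d : R) :
  lbound S d -> (forall e, 0 < e -> exists2 r, S r & r <= d + e) -> inf S = d.
Proof.
move=> Sd S_approx.
have S_neq0 : S !=set0 by have [r Sr _] := S_approx 1 ltr01; exists r.
apply/eqP; rewrite eq_le lb_le_inf // andbT.
apply/ler_addgt0Pr => e e0; have [r Sr le_r] := S_approx e e0.
by apply: le_trans le_r; apply: ge_inf => //; exists d.
Qed.

Section TransportCost.
Variables (R : realType) (X Y : finType).

Definition transport_cost (p D : X -> Y -> R) : R :=
  \sum_(x : X) \sum_(y : Y) p x y * D x y.

Lemma transport_cost_comb (p f g : X -> Y -> R) (a b : R) :
  transport_cost p (fun x y => a * f x y + b * g x y) =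
  a * transport_cost p f + b * transport_cost p g.
Proof.
rewrite /transport_cost !mulr_sumr -big_split; apply: eq_bigr => x _.
by rewrite !mulr_sumr -big_split; apply: eq_bigr => y _ /=; ring.
Qed.

Lemma ler_transport_cost (p f g : X -> Y -> R) :
  (forall x y, 0 <= p x y) -> (forall x y, f x y <= g x y) ->
  transport_cost p f <= transport_cost p g.
Proof.
move=> p_ge0 le_fg; apply: ler_sum => x _; apply: ler_sum => y _.
exact: ler_wpM2l.
Qed.

Lemma transport_cost_ge0 (p D : X -> Y -> R) :
  (forall x y, 0 <= p x y) -> (forall x y, 0 <= D x y) ->
  0 <= transport_cost p D.
Proof.
move=> p_ge0 D_ge0; apply: sumr_ge0 => x _; apply: sumr_ge0 => y _.
exact: mulr_ge0.
Qed.

Lemma coupling_mass (a : X -> R) (b : Y -> R) (p : X -> Y -> R) :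
  is_pmf a -> is_coupling a b p -> transport_cost p (fun _ _ => 1) = 1.
Proof.
move=> [_ a1] [_ pa _]; rewrite -[RHS]a1; apply: eq_bigr => x _.
by rewrite -pa; apply: eq_bigr => y _; rewrite mulr1.
Qed.

Lemma is_coupling_prod (a : X -> R) (b : Y -> R) :
  is_pmf a -> is_pmf b -> is_coupling a b (fun x y => a x * b y).
Proof.
move=> [a_ge0 a1] [b_ge0 b1]; split.
- by move=> x y; rewrite mulr_ge0.
- by move=> x; rewrite -mulr_sumr b1 mulr1.
- by move=> y; rewrite -mulr_suml a1 mul1r.
Qed.

Section Wasserstein.
Variables (a : X -> R) (b : Y -> R) (D : X -> Y -> R).
Hypothesis D_ge0 : forall x y, 0 <= D x y.

Let costs := [set r | exists p, is_coupling a b p /\ r = transport_cost p D].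

Let costs_lbound0 : lbound costs 0.
Proof. by move=> r [p [[p_ge0 _ _] ->]]; exact: transport_cost_ge0. Qed.

Lemma dW_le_cost (p : X -> Y -> R) :
  is_coupling a b p -> dW a b D <= transport_cost p D.
Proof.
move=> p_cpl; apply: (@ge_inf _ costs); last by exists p.
by exists 0; exact: costs_lbound0.
Qed.

Hypotheses (a_pmf : is_pmf a) (b_pmf : is_pmf b).

Let costs_neq0 : costs !=set0.
Proof.
exists (transport_cost (fun x y => a x * b y) D).
by exists (fun x y => a x * b y); split; first exact: is_coupling_prod.
Qed.

Lemma dW_ge0 : 0 <= dW a b D.
Proof. exact: (lb_le_inf costs_neq0 costs_lbound0). Qed.

Lemma dW_near_optimal (eps : R) : 0 < eps ->
  exists2 p, is_coupling a b p & transport_cost p D < dW a b D + eps.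
Proof.
move=> eps_gt0.
have [r [p [p_cpl ->]] lt_r] := @inf_adherent _ costs eps eps_gt0
  (conj costs_neq0 (ex_intro _ 0 costs_lbound0)).
by exists p.
Qed.

End Wasserstein.
End TransportCost.

Section Laws.
Variables (R : realType) (X Y : finType) (MX : fmc R X) (MY : fmc R Y).
Variables (mu : X -> Y -> R) (K : nat -> X -> Y -> X -> Y -> R).

Lemma expect_atE t D : expect_at mu K t D = transport_cost (law mu K t) D.
Proof. by []. Qed.

Lemma expect_at_succ t D :
  expect_at mu K t.+1 D =
  expect_at mu K t (fun x y => transport_cost (K t x y) D).
Proof.
rewrite !expect_atE /transport_cost /=.
under eq_bigr => x' _ do under eq_bigr => y' _ do
  [rewrite mulr_suml; under eq_bigr => x _ do rewrite mulr_suml].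
under [RHS]eq_bigr => x _ do under eq_bigr => y _ do
  [rewrite mulr_sumr; under eq_bigr => x' _ do rewrite mulr_sumr].
under eq_bigr => x' _ do rewrite exchange_big; rewrite exchange_big.
apply: eq_bigr => x _; under eq_bigr => x' _ do rewrite exchange_big.
rewrite exchange_big; apply: eq_bigr => y _; apply: eq_bigr => x' _.
by apply: eq_bigr => y' _; rewrite mulrA.
Qed.

Hypothesis K_cpl : is_markov_coupling MX MY mu K.

Lemma law_ge0 t x y : 0 <= law mu K t x y.
Proof.
have [[mu_ge0 _ _] Kt_cpl] := K_cpl.
elim: t x y => [|t IH] x y //=.
apply: sumr_ge0 => x0 _; apply: sumr_ge0 => y0 _; apply: mulr_ge0 => //.
by have [] := Kt_cpl t x0 y0.
Qed.

Lemma expect_at1 t : expect_at mu K t (fun _ _ => 1) = 1.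
Proof.
have [mu_cpl Kt_cpl] := K_cpl.
elim: t => [|t IH]; first exact: coupling_mass (init_pmf MX) mu_cpl.
rewrite expect_at_succ -[RHS]IH; congr expect_at.
apply/funext => x; apply/funext => y.
exact: coupling_mass (kern_pmf MX x) (Kt_cpl t x y).
Qed.

End Laws.

Section DiscountedCost.
Variables (R : realType) (X Y : finType) (MX : fmc R X) (MY : fmc R Y).
Variables (C : X -> Y -> R) (delta : R).
Hypotheses (C_ge0 : forall x y, 0 <= C x y) (delta_ge0 : 0 <= delta)
  (delta_le1 : delta <= 1).

Local Notation Cd := (Cdl MX MY delta C).
Local Notation dWk D := (fun x y => dW (kern MX x) (kern MY y) D).

Lemma Cdl_ge0 n x y : 0 <= Cd n x y.
Proof.
elim: n x y => [|n IH] x y //=.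
rewrite addr_ge0 ?mulr_ge0 ?subr_ge0 //.
by apply: dW_ge0 => //; exact: kern_pmf.
Qed.

Section Coupling.
Variables (mu : X -> Y -> R) (K : nat -> X -> Y -> X -> Y -> R).

Definition discounted_cost n m :=
  \sum_(t < m) delta * (1 - delta) ^+ t * expect_at mu K t C
  + (1 - delta) ^+ m * expect_at mu K m (Cd n).

Lemma discounted_cost_succ n m :
  discounted_cost n m.+1 = discounted_cost n.+1 m + (1 - delta) ^+ m.+1 *
    (expect_at mu K m (fun x y => transport_cost (K m x y) (Cd n))
     - expect_at mu K m (dWk (Cd n))).
Proof.
rewrite /discounted_cost big_ord_recr /= expect_at_succ.
have -> : expect_at mu K m (Cd n.+1) =
    delta * expect_at mu K m C + (1 - delta) * expect_at mu K m (dWk (Cd n)).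
  exact: transport_cost_comb.
by rewrite exprS; ring.
Qed.

Hypothesis K_cpl : is_markov_coupling MX MY mu K.

Let slack_ge0 n m :
  0 <= expect_at mu K m (fun x y => transport_cost (K m x y) (Cd n))
       - expect_at mu K m (dWk (Cd n)).
Proof.
rewrite subr_ge0 !expect_atE; apply: ler_transport_cost => [|x y].
  exact: law_ge0 K_cpl m.
by apply: dW_le_cost; [exact: Cdl_ge0|have [_] := K_cpl].
Qed.

Lemma discounted_cost_le_succ n m :
  discounted_cost n.+1 m <= discounted_cost n m.+1.
Proof.
rewrite discounted_cost_succ lerDl mulr_ge0 ?slack_ge0 //.
by rewrite exprn_ge0 // subr_ge0.
Qed.

Lemma discounted_cost_succ_le n m (eps : R) :
  (forall x y,
     transport_cost (K m x y) (Cd n) <= dW (kern MX x) (kern MY y) (Cd n) + eps) ->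
  discounted_cost n m.+1 <= discounted_cost n.+1 m + eps.
Proof.
move=> near_opt; rewrite discounted_cost_succ lerD2l.
have slack_le : expect_at mu K m (fun x y => transport_cost (K m x y) (Cd n))
    - expect_at mu K m (dWk (Cd n)) <= eps.
  rewrite lerBlDl -[X in _ + X]mulr1 -(expect_at1 K_cpl m) -[X in X + _]mul1r.
  rewrite -[leRHS]transport_cost_comb !expect_atE.
  apply: ler_transport_cost => [|x y]; first exact: law_ge0 K_cpl m.
  by rewrite mul1r mulr1.
apply: le_trans slack_le; apply: ler_piMl; first exact: slack_ge0.
by rewrite exprn_ile1 ?subr_ge0 // lerBlDr lerDl.
Qed.

Lemma discounted_cost_le_shift n m :
  discounted_cost n m <= discounted_cost 0 (m + n).
Proof.
elim: n m => [|n IH] m; first by rewrite addn0.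
rewrite addnS -addSn; apply: le_trans (IH m.+1).
exact: discounted_cost_le_succ.
Qed.

Lemma discounted_cost_shift_le k (eps : R) :
  (forall n m, (m + n.+1)%N = k -> forall x y,
     transport_cost (K m x y) (Cd n) <= dW (kern MX x) (kern MY y) (Cd n) + eps) ->
  forall n m, (m + n)%N = k ->
  discounted_cost 0 k <= discounted_cost n m + n%:R * eps.
Proof.
move=> near_opt; elim=> [|n IH] m k_eq.
  by rewrite addn0 in k_eq; rewrite k_eq mul0r addr0.
apply: le_trans (IH m.+1 _) _; first by rewrite addSn -addnS.
have := discounted_cost_succ_le (near_opt n m k_eq).
by rewrite mulrSr; lra.
Qed.

Lemma discounted_cost0 n : discounted_cost n 0 = transport_cost mu (Cd n).
Proof. by rewrite /discounted_cost big_ord0 expr0 add0r mul1r. Qed.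

Lemma dW_le_discounted_cost k :
  dW (init MX) (init MY) (Cd k) <= discounted_cost 0 k.
Proof.
apply: le_trans (discounted_cost_le_shift k 0); rewrite discounted_cost0.
by apply: dW_le_cost; [exact: Cdl_ge0|have [] := K_cpl].
Qed.

End Coupling.

(* The coupling used at time [t] must be near-optimal for the cost
   [C^{delta,(k-1-t)}], so the kernels are chosen backwards in time. *)
Lemma near_optimal_markov_coupling k (eps : R) : 0 < eps ->
  exists mu K, is_markov_coupling MX MY mu K /\
    discounted_cost mu K 0 k
    <= dW (init MX) (init MY) (Cd k) + k.+1%:R * eps.
Proof.
move=> eps_gt0.
have [mu mu_cpl mu_near] :=
  dW_near_optimal (Cdl_ge0 k) (init_pmf MX) (init_pmf MY) eps_gt0.
have near n x y :=
  dW_near_optimal (Cdl_ge0 n) (kern_pmf MX x) (kern_pmf MY y) eps_gt0.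
pose q n x y := s2val (cid2 (near n x y)).
pose K t := q (k.-1 - t)%N.
have K_cpl : is_markov_coupling MX MY mu K.
  by split=> // t x y; exact: s2valP.
exists mu, K; split=> //.
apply: le_trans (discounted_cost_shift_le K_cpl (eps := eps) _ (add0n k)) _.
  move=> n m k_eq x y; rewrite /K.
  have -> : (k.-1 - m = n)%N by rewrite -k_eq addnS /= addKn.
  exact/ltW/(s2valP' (cid2 (near n x y))).
by rewrite discounted_cost0 mulrSr; lra.
Qed.

End DiscountedCost.

Theorem proposition18 (R : realType) (X Y : finType) (MX : fmc R X) (MY : fmc R Y)
  (C : X -> Y -> R) (hC : forall x y, 0 <= C x y)
  (delta : R) (hd0 : 0 <= delta) (hd1 : delta <= 1) (k : nat) :
  dWL MX MY delta k C = dW (init MX) (init MY) (Cdl MX MY delta C k).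
Proof.
apply: inf_eq_approx => [r [mu [K [K_cpl ->]]]|e e_gt0].
  exact: (dW_le_discounted_cost hC hd0 hd1 K_cpl).
have k1_neq0 : k.+1%:R != 0 :> R by rewrite pnatr_eq0.
have [|mu [K [K_cpl le_cost]]] :=
  near_optimal_markov_coupling MX MY hC hd0 hd1 k (eps := e / k.+1%:R).
  by rewrite divr_gt0 ?ltr0n.
exists (discounted_cost MX MY C delta mu K 0 k); first by exists mu, K.
by rewrite mulrC divfK in le_cost.
Qed.
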